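(* Let $q$ be a prime power, $c\in\mathbb{F}_q^*$ and $\delta\in\mathbb{F}_{q^4}$. Then $f(x)=g(x^q+x+\delta)+cx$ is a permutation polynomial of $\mathbb{F}_{q^4}$ if one of the following holds: (i) $g(x)=c_0\left(u(x)^{q^3}+u(x)^{q^2}+u(x)^q+u(x)\right)$, where $u(x)\in\mathbb{F}_{q^4}[x]$ and $c_0\in\mathbb{F}_{q^4}^*$ satisfies $c_0^q+c_0=0$; (ii) $g(x)=c_0x^{i(q^3+q^2+q+1)}$, where $i$ is a positive integer and $c_0\in\mathbb{F}_{q^4}^*$ satisfies $c_0^q+c_0=0$.
   Context: A polynomial is a permutation polynomial of a finite field if it induces a bijection of that field. $\mathbb{F}_q$ is viewed as the subfield of $\mathbb{F}_{q^4}$. *)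

From HB Require Import structures.
From mathcomp Require Import all_boot all_order all_algebra all_field.
Set Implicit Arguments. Unset Strict Implicit. Unset Printing Implicit Defensive.
Import GRing.Theory.
Local Open Scope ring_scope.

Definition prime_power (q : nat) : Prop :=
  exists p k : nat, [/\ prime p, (0 < k)%N & q = (p ^ k)%N].

Definition is_perm_poly (L : finFieldType) (P : {poly L}) : Prop :=
  bijective (fun x : L => P.[x]).

From HB Require Import structures.
From mathcomp Require Import all_boot all_order all_algebra all_field.
From mathcomp Require Import ring.
Set Implicit Arguments. Unset Strict Implicit. Unset Printing Implicit Defensive.
Import GRing.Theory.
Local Open Scope ring_scope.

(* Let q be a power of the characteristic of a field L, so that the map
   x |-> x^q is additive, and let F(x) = x^q + x + delta.  The heart of the
   proof is an injectivity criterion (twisted_map_injective): if c^q = c is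
   nonzero, c0^q + c0 = 0, and G takes its values in c0 * F_q (where
   F_q = {y | y^q = y}), then x |-> G(F x) + c x is injective.  Indeed, if two
   points x, z have the same image then c (x - z) lies in c0 * F_q, so
   x - z = c0 s with s^q = s, whence (x - z)^q + (x - z) = 0, i.e. F x = F z,
   and then c x = c z.
   When #|L| = q^4 every element satisfies x^(q^4) = x, so the relative trace
   z^(q^3) + z^(q^2) + z^q + z and the relative norm y^(q^3+q^2+q+1) both take
   values in F_q (trace4_fixed, norm4_fixed).  In both cases of the theorem g
   is c0 times such a function, and since L is finite, injectivity of the
   induced map gives the required bijection. *)

Section FrobeniusKernel.

Variables (L : fieldType) (q : nat).
Hypothesis q_char : [pchar L].-nat q.

Lemma frobD (x y : L) : (x + y) ^+ q = x ^+ q + y ^+ q.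
Proof. exact: exprDn_pchar. Qed.

Lemma frobB (x y : L) : (x - y) ^+ q = x ^+ q - y ^+ q.
Proof. by rewrite frobD exprNn_pchar. Qed.

Lemma frob_kernel_scale (c0 s : L) :
  c0 ^+ q + c0 = 0 -> s ^+ q = s -> (c0 * s) ^+ q + c0 * s = 0.
Proof. by move=> c0q sq; rewrite exprMn sq -mulrDl c0q mul0r. Qed.

Lemma twisted_map_injective (c c0 delta : L) (G h : L -> L) :
  c ^+ q = c -> c != 0 -> c0 ^+ q + c0 = 0 ->
  (forall y, h y ^+ q = h y) -> (forall y, G y = c0 * h y) ->
  injective (fun x => G (x ^+ q + x + delta) + c * x).
Proof.
move=> cq c_neq0 c0q hq Gh x z /=; rewrite !Gh.
set Fx := x ^+ q + x + delta; set Fz := z ^+ q + z + delta => E.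
set s := (h Fz - h Fx) / c.
have sq : s ^+ q = s by rewrite /s exprMn exprVn frobB !hq cq.
have diff_xz : x - z = c0 * s.
  apply: (mulIf c_neq0); rewrite /s mulrA divfK //.
  have -> : (x - z) * c = (c0 * h Fx + c * x) - c0 * h Fx - c * z by ring.
  by rewrite E; ring.
have F_eq : Fx = Fz.
  apply/eqP; rewrite -subr_eq0 /Fx /Fz.
  have -> : x ^+ q + x + delta - (z ^+ q + z + delta) = (x - z) ^+ q + (x - z).
    by rewrite frobB; ring.
  by rewrite diff_xz frob_kernel_scale.
by move: E; rewrite F_eq => /addrI /(mulfI c_neq0).
Qed.

End FrobeniusKernel.

Section QuarticExtension.

Variables (L : finFieldType) (q : nat).
Hypothesis card_L : #|L| = (q ^ 4)%N.

Definition trace4 (z : L) : L := z ^+ (q ^ 3) + z ^+ (q ^ 2) + z ^+ q + z.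
Definition norm4 (y : L) : L := y ^+ (q ^ 3 + q ^ 2 + q + 1).

Lemma frob4 (x : L) : x ^+ (q ^ 4) = x.
Proof. by rewrite -card_L expf_card. Qed.

Lemma norm4_fixed (y : L) : norm4 y ^+ q = norm4 y.
Proof.
rewrite /norm4 -exprM !mulnDl mul1n -!expnSr mulnn -!addnA exprD frob4.
by rewrite !addnA addn1 exprS.
Qed.

Lemma trace4_fixed : [pchar L].-nat q -> forall z : L, trace4 z ^+ q = trace4 z.
Proof.
move=> q_char z; rewrite /trace4 !(frobD q_char) -!exprM -!expnSr frob4 mulnn.
by rewrite [RHS]addrC !addrA.
Qed.

End QuarticExtension.

Theorem proposition6 (q : nat) (L : finFieldType) (c delta : L) (g : {poly L}) :
  prime_power q ->
  #|L| = (q ^ 4)%N ->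
  (* c lies in the subfield F_q = {x | x^q = x} and is nonzero *)
  c ^+ q = c -> c != 0 ->
  ((exists (u : {poly L}) (c0 : L),
      [/\ c0 != 0, c0 ^+ q + c0 = 0 &
          g = c0 *: (u ^+ (q ^ 3) + u ^+ (q ^ 2) + u ^+ q + u)])
   \/
   (exists (i : nat) (c0 : L),
      [/\ (0 < i)%N, c0 != 0, c0 ^+ q + c0 = 0 &
          g = c0 *: 'X ^+ (i * (q ^ 3 + q ^ 2 + q + 1))])) ->
  is_perm_poly (g \Po ('X ^+ q + 'X + delta%:P) + c *: 'X).
Proof.
move=> [p [k [p_prime k_gt0 q_def]]] card_L cq c_neq0 g_shape.
have q_char : [pchar L].-nat q.
  have p_char : p \in [pchar L].
    by apply: (@card_finPcharP L p (k * 4)) => //; rewrite card_L q_def expnM.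
  by rewrite q_def pnatX (pnatE _ p_prime) p_char.
have [c0 [h [c0q hq g_h]]] : exists c0 (h : L -> L),
    [/\ c0 ^+ q + c0 = 0, forall y, h y ^+ q = h y & forall y, g.[y] = c0 * h y].
  case: g_shape => [[u [c0 [_ c0q ->]]] | [i [c0 [_ _ c0q ->]]]].
    exists c0, (fun y => trace4 q u.[y]); split=> // y.
      exact: trace4_fixed.
    by rewrite hornerZ !hornerD !horner_exp.
  exists c0, (fun y => norm4 q (y ^+ i)); split=> // y.
    exact: norm4_fixed.
  by rewrite hornerZ horner_exp hornerX exprM.
apply: injF_bij => x z; rewrite !(hornerE, horner_comp) /=.
exact: (twisted_map_injective q_char cq c_neq0 c0q hq g_h).
Qed.
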